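(* Let $\mu\in(0,1)$, $\sigma>1$ with $\frac{1}{1-\mu}<\sigma$, and let $v_n>0$, $v_m>0$, $\rho>0$. For each nonzero integer $k$ and $\tau>0$ put $\alpha=(\sigma-1)\tau$, \[ Z_k=\frac{\alpha^2\rho^2\left(1-(-1)^k e^{-\alpha\rho\pi}\right)}{\left(k^2+\alpha^2\rho^2\right)\left(1-e^{-\alpha\rho\pi}\right)},\qquad \overline{G}=\left[\frac{\sigma}{2\pi\rho}\cdot\frac{2\left(1-e^{-\alpha\pi\rho}\right)}{\alpha}\right]^{\frac{1}{1-\sigma}}, \] and \[ M_k(\tau)=\frac{\overline{G}^{-\mu}}{\sigma}\begin{bmatrix} v_n\mu\left(\frac{A(Z_k)}{\sigma}-1\right) & v_n\mu\left(\frac{B(Z_k)}{\sigma}+1\right)\\[2mm] v_m A(Z_k) & v_m B(Z_k)\end{bmatrix}, \] where for $Z\in[0,1]$ \[ \delta(Z)=1-\frac{\mu}{\sigma}Z-\frac{\sigma-1}{\sigma}Z^2,\quad A(Z)=\frac{1+\frac{\mu}{\sigma-1}Z-\left(1+\frac{\mu^2}{\sigma-1}\right)Z^2}{\delta(Z)},\quad B(Z)=-\frac{(\mu Z-1)^2}{\delta(Z)}. \] Let $\tau_k^*>0$ denote the critical point for frequency $k$, namely the value such that the maximal real part of the eigenvalues of $M_k(\tau)$ is positive for $\tau\in(0,\tau_k^* )$, zero at $\tau_k^*$, and negative for $\tau>\tau_k^*$. Then $\tau_k^*<\tau_{k+2}^*$ whenever $k>0$, and $\tau_k^*<\tau_{k-2}^*$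 whenever $k<0$.
   Context: $M_k(\tau)$ is the linearization matrix for the $k$-th Fourier modes of perturbations of the firm and worker share functions around the homogeneous stationary state of a core-periphery model on a circle of radius $\rho$ with firm and worker migration; $\mu$ is the manufacturing expenditure share, $\sigma$ the elasticity of substitution, $\tau$ the transport cost parameter, $v_n,v_m$ migration speeds. Under the stated hypotheses such a critical point $\tau_k^*$ exists (and is uniquely determined by the stated sign pattern) for every nonzero integer $k$. *)

From Stdlib Require Import Reals ZArith.
From Coquelicot Require Import Coquelicot.
Open Scope R_scope.

Section Model.
Variables (mu sigma vn vm rho : R).

Definition alpha (tau : R) : R := (sigma - 1) * tau.

Definition Zk (k : Z) (tau : R) : R :=
  let a := alpha tau in
  (a ^ 2 * rho ^ 2 * (1 - powerRZ (-1) k * exp (- (a * rho * PI)))) /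
  ((IZR k ^ 2 + a ^ 2 * rho ^ 2) * (1 - exp (- (a * rho * PI)))).

Definition Gbar (tau : R) : R :=
  let a := alpha tau in
  Rpower (sigma / (2 * PI * rho) * (2 * (1 - exp (- (a * PI * rho))) / a))
         (1 / (1 - sigma)).

Definition delta (Z : R) : R := 1 - mu / sigma * Z - (sigma - 1) / sigma * Z ^ 2.
Definition Afun (Z : R) : R :=
  (1 + mu / (sigma - 1) * Z - (1 + mu ^ 2 / (sigma - 1)) * Z ^ 2) / delta Z.
Definition Bfun (Z : R) : R := - ((mu * Z - 1) ^ 2) / delta Z.

Definition Mk11 (k : Z) (tau : R) : R :=
  Rpower (Gbar tau) (- mu) / sigma * (vn * mu * (Afun (Zk k tau) / sigma - 1)).
Definition Mk12 (k : Z) (tau : R) : R :=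
  Rpower (Gbar tau) (- mu) / sigma * (vn * mu * (Bfun (Zk k tau) / sigma + 1)).
Definition Mk21 (k : Z) (tau : R) : R :=
  Rpower (Gbar tau) (- mu) / sigma * (vm * Afun (Zk k tau)).
Definition Mk22 (k : Z) (tau : R) : R :=
  Rpower (Gbar tau) (- mu) / sigma * (vm * Bfun (Zk k tau)).

End Model.

Definition is_eigenvalue2 (a b c d : R) (l : C) : Prop :=
  Cminus (Cmult (Cminus (RtoC a) l) (Cminus (RtoC d) l)) (Cmult (RtoC b) (RtoC c))
  = RtoC 0.

Definition max_re_eig2 (a b c d : R) (s : R) : Prop :=
  (exists l, is_eigenvalue2 a b c d l /\ Re l = s) /\
  (forall l, is_eigenvalue2 a b c d l -> Re l <= s).

Definition max_re_eig_Mk (mu sigma vn vm rho : R) (k : Z) (tau s : R) : Prop :=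
  max_re_eig2 (Mk11 mu sigma vn rho k tau) (Mk12 mu sigma vn rho k tau)
              (Mk21 mu sigma vm rho k tau) (Mk22 mu sigma vm rho k tau) s.

Definition critical_point (mu sigma vn vm rho : R) (k : Z) (taus : R) : Prop :=
  0 < taus /\
  (forall tau s, 0 < tau < taus -> max_re_eig_Mk mu sigma vn vm rho k tau s -> 0 < s) /\
  (forall s, max_re_eig_Mk mu sigma vn vm rho k taus s -> s = 0) /\
  (forall tau s, taus < tau -> max_re_eig_Mk mu sigma vn vm rho k tau s -> s < 0).

From Stdlib Require Import Reals ZArith.
From Coquelicot Require Import Coquelicot.
From Stdlib Require Import Lra Lia Psatz.
Open Scope R_scope.

(* For 0 < Z < 1 the matrix g [[vn mu (A/sigma - 1), vn mu (B/sigma + 1)], [vm A, vm B]]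
   (g > 0) has determinant -g^2 vn vm mu (A + B), and (A + B) delta = Z detQ(Z) with delta > 0
   and detQ affine and strictly decreasing; moreover its trace is negative whenever A + B <= 0.
   Hence the maximal real part of the spectrum of M_k(tau) has the sign of detQ(Z_k(tau)).
   For fixed tau, Z_k(tau) = N (1 - (-1)^k e) / ((k^2 + N)(1 - e)) strictly decreases when
   k^2 grows with the parity of k fixed, so detQ(Z_k(tau)) < detQ(Z_(k+-2)(tau)). If
   tau*_(k+-2) <= tau*_k, then at tau = tau*_(k+-2) we would get
   0 <= detQ(Z_k) < detQ(Z_(k+-2)) = 0. *)

Lemma sign_eq_0_inv x : sign x = 0 -> x = 0.
Proof. intro Hx. destruct (Req_dec x 0) as [|Hne]; [easy|]. now apply sign_neq_0 in Hne. Qed.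

Lemma is_eigenvalue2_iff a b c d x y :
  is_eigenvalue2 a b c d (x, y) <->
  x ^ 2 - (a + d) * x + (a * d - b * c) - y ^ 2 = 0 /\ y * (a + d - 2 * x) = 0.
Proof.
  unfold is_eigenvalue2, Cminus, Cmult, Cplus, Copp, RtoC; simpl.
  split; [intro H; injection H; intros; split; lra | intros [H1 H2]; f_equal; lra].
Qed.

Lemma is_eigenvalue2_real a b c d x :
  x ^ 2 - (a + d) * x + (a * d - b * c) = 0 -> is_eigenvalue2 a b c d (x, 0).
Proof. intro H. apply is_eigenvalue2_iff. split; lra. Qed.

Lemma is_eigenvalue2_top_real a b c d :
  0 <= (a + d) ^ 2 - 4 * (a * d - b * c) ->
  is_eigenvalue2 a b c d ((a + d + sqrt ((a + d) ^ 2 - 4 * (a * d - b * c))) / 2, 0).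
Proof.
  intro Hdisc. apply is_eigenvalue2_real.
  pose proof (sqrt_sqrt _ Hdisc). nra.
Qed.

Lemma max_re_eig2_exists a b c d : exists s, max_re_eig2 a b c d s.
Proof.
  set (T := a + d). set (D := a * d - b * c).
  destruct (Rle_lt_dec 0 (T ^ 2 - 4 * D)) as [Hdisc | Hdisc].
  - pose proof (sqrt_pos (T ^ 2 - 4 * D)) as Hq. pose proof (sqrt_sqrt _ Hdisc) as Hqq.
    set (q := sqrt (T ^ 2 - 4 * D)) in *.
    exists ((T + q) / 2). split.
    + eexists. split; [now apply is_eigenvalue2_top_real | easy].
    + intros [x y] Hl. apply is_eigenvalue2_iff in Hl as [E1 E2]. simpl.
      destruct (Rmult_integral _ _ E2) as [-> | E]; unfold T, D in *; nra.
  - set (q := sqrt (- (T ^ 2 - 4 * D))).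
    assert (Hqq : q * q = - (T ^ 2 - 4 * D)) by (apply sqrt_sqrt; lra).
    exists (T / 2). split.
    + exists (T / 2, q / 2). split; [|easy]. apply is_eigenvalue2_iff. unfold T, D in *. split; nra.
    + intros [x y] Hl. apply is_eigenvalue2_iff in Hl as [E1 E2]. simpl.
      destruct (Rmult_integral _ _ E2) as [-> | E]; unfold T, D in *; nra.
Qed.

Lemma max_re_eig2_sign a b c d s :
  a + d < 0 \/ a * d - b * c < 0 -> max_re_eig2 a b c d s ->
  sign s = sign (b * c - a * d).
Proof.
  intros Htr [[[x y] [Hl Hs]] Hmax]. simpl in Hs. subst s.
  pose proof Hl as [E1 E2]%is_eigenvalue2_iff.
  destruct (Rtotal_order (a * d - b * c) 0) as [Hdet | [Hdet | Hdet]].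
  - rewrite (sign_eq_1 (b * c - a * d)) by lra. apply sign_eq_1.
    assert (Hdisc : 0 <= (a + d) ^ 2 - 4 * (a * d - b * c)) by (pose proof (pow2_ge_0 (a + d)); lra).
    pose proof (sqrt_pos ((a + d) ^ 2 - 4 * (a * d - b * c))) as Hq.
    pose proof (sqrt_sqrt _ Hdisc) as Hqq.
    set (q := sqrt ((a + d) ^ 2 - 4 * (a * d - b * c))) in *.
    enough (0 < (a + d + q) / 2 <= x) by lra.
    split; [nra|]. now apply (Hmax (_, 0)), is_eigenvalue2_top_real.
  - replace (b * c - a * d) with 0 by lra.
    assert (HT : a + d < 0) by lra.
    assert (0 <= x) by (apply (Hmax (0, 0)), is_eigenvalue2_real; lra).
    replace x with 0; [easy|].
    destruct (Rmult_integral _ _ E2) as [-> | E]; nra.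
  - rewrite (sign_eq_m1 (b * c - a * d)) by lra. apply sign_eq_m1.
    assert (HT : a + d < 0) by lra.
    destruct (Rmult_integral _ _ E2) as [-> | E]; nra.
Qed.

Definition detQ (mu sigma Z : R) : R :=
  mu / (sigma - 1) + 2 * mu - (1 + mu ^ 2 / (sigma - 1) + mu ^ 2) * Z.

Lemma detQ_decreasing mu sigma Z Z' : 1 < sigma -> Z < Z' -> detQ mu sigma Z' < detQ mu sigma Z.
Proof.
  intros Hsigma HZ. unfold detQ.
  assert (0 <= mu ^ 2 / (sigma - 1)) by (apply Rdiv_le_0_compat; [apply pow2_ge_0 | lra]).
  pose proof (pow2_ge_0 mu). nra.
Qed.

Section Migration_matrix.
Variables mu sigma Z : R.
Hypotheses (Hmu : 0 < mu < 1) (Hsigma : 1 < sigma) (HZ : 0 < Z < 1).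

Lemma delta_pos : 0 < delta mu sigma Z.
Proof.
  assert (delta mu sigma Z = ((sigma - 1) * (1 - Z ^ 2) + (1 - mu * Z)) / sigma)
    as -> by (unfold delta; field; lra).
  apply Rdiv_lt_0_compat; [|lra].
  assert (0 < (sigma - 1) * (1 - Z ^ 2)) by (apply Rmult_lt_0_compat; nra). nra.
Qed.

Lemma Afun_add_Bfun :
  (Afun mu sigma Z + Bfun mu sigma Z) * delta mu sigma Z = Z * detQ mu sigma Z.
Proof.
  pose proof delta_pos. unfold Afun, Bfun, detQ. field. lra.
Qed.

Lemma Bfun_mul_delta : Bfun mu sigma Z * delta mu sigma Z = - (1 - mu * Z) ^ 2.
Proof. pose proof delta_pos. unfold Bfun. field. lra. Qed.

Lemma Bfun_neg : Bfun mu sigma Z < 0.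
Proof.
  pose proof delta_pos. pose proof Bfun_mul_delta.
  assert (0 < (1 - mu * Z) ^ 2) by (apply pow_lt; nra). nra.
Qed.

Lemma Bfun_gt_neg_sigma : - sigma < Bfun mu sigma Z.
Proof.
  pose proof delta_pos. pose proof Bfun_mul_delta.
  assert (sigma * delta mu sigma Z = sigma - mu * Z - (sigma - 1) * Z ^ 2)
    by (unfold delta; field; lra).
  assert (0 < (sigma - 1) * (1 - Z ^ 2)) by (apply Rmult_lt_0_compat; nra).
  assert (0 < mu * Z * (1 - mu * Z)) by (apply Rmult_lt_0_compat; nra).
  nra.
Qed.

Variables vn vm g : R.
Hypotheses (Hvn : 0 < vn) (Hvm : 0 < vm) (Hg : 0 < g).

Lemma migration_trace_neg : Afun mu sigma Z + Bfun mu sigma Z <= 0 ->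
  g * (vn * mu * (Afun mu sigma Z / sigma - 1)) + g * (vm * Bfun mu sigma Z) < 0.
Proof.
  intro HAB. pose proof Bfun_neg. pose proof Bfun_gt_neg_sigma.
  assert (Afun mu sigma Z / sigma - 1 < 0).
  { apply Rlt_minus, Rlt_div_l; lra. }
  assert (0 < g * (vn * mu)) by (repeat apply Rmult_lt_0_compat; lra).
  assert (0 < g * vm) by (apply Rmult_lt_0_compat; lra).
  nra.
Qed.

Lemma max_re_eig_migration_sign s :
  max_re_eig2 (g * (vn * mu * (Afun mu sigma Z / sigma - 1)))
              (g * (vn * mu * (Bfun mu sigma Z / sigma + 1)))
              (g * (vm * Afun mu sigma Z)) (g * (vm * Bfun mu sigma Z)) s ->
  sign s = sign (detQ mu sigma Z).
Proof.
  intro Hs. pose proof delta_pos as Hd. pose proof Afun_add_Bfun as HAB.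
  set (A := Afun mu sigma Z) in *. set (B := Bfun mu sigma Z) in *.
  set (K := g * g * vn * mu * vm).
  assert (HK : 0 < K) by (unfold K; repeat apply Rmult_lt_0_compat; lra).
  assert (Hdet : g * (vn * mu * (B / sigma + 1)) * (g * (vm * A))
                 - g * (vn * mu * (A / sigma - 1)) * (g * (vm * B)) = K * (A + B))
    by (unfold K; field; lra).
  assert (HABQ : A + B = Z / delta mu sigma Z * detQ mu sigma Z)
    by (apply (Rmult_eq_reg_r (delta mu sigma Z)); [rewrite HAB; field |]; lra).
  erewrite max_re_eig2_sign; [| | exact Hs].
  - rewrite Hdet, HABQ, !sign_mult, (sign_eq_1 K), (sign_eq_1 (Z / _)); [ring | | easy].
    apply Rdiv_lt_0_compat; lra.
  - destruct (Rle_lt_dec (A + B) 0) as [Hneg | Hpos].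
    + left. now apply migration_trace_neg.
    + right. nra.
Qed.

End Migration_matrix.

Definition Zform (N e p K : R) : R := N * (1 - p * e) / ((K + N) * (1 - e)).

Section Zform_bounds.
Variables N e p : R.
Hypotheses (HN : 0 < N) (He : 0 < e < 1) (Hp : -1 <= p <= 1).

Lemma Zform_num_pos : 0 < N * (1 - p * e).
Proof. apply Rmult_lt_0_compat; nra. Qed.

Lemma Zform_pos K : 0 <= K -> 0 < Zform N e p K.
Proof.
  intro HK. apply Rdiv_lt_0_compat; [apply Zform_num_pos|].
  apply Rmult_lt_0_compat; lra.
Qed.

Lemma Zform_decreasing K K' : 0 <= K -> K < K' -> Zform N e p K' < Zform N e p K.
Proof.
  intros HK HKK'. apply Rmult_lt_compat_l; [apply Zform_num_pos|].
  apply Rinv_lt_contravar; [apply Rmult_lt_0_compat; apply Rmult_lt_0_compat|]; nra.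
Qed.

Lemma Zform_lt_1 K : e * (2 * N + 1) < 1 -> 1 <= K -> Zform N e p K < 1.
Proof.
  intros HeN HK. apply Rlt_div_l; [apply Rmult_lt_0_compat; lra|].
  assert (N * (1 - p * e) <= N * (1 + e)) by (apply Rmult_le_compat_l; nra).
  assert ((1 + N) * (1 - e) <= (K + N) * (1 - e)) by (apply Rmult_le_compat_r; lra).
  nra.
Qed.

End Zform_bounds.

Lemma powerRZ_m1_bounds k : -1 <= powerRZ (-1) k <= 1.
Proof.
  assert (powerRZ (-1) k * powerRZ (-1) k = 1).
  { rewrite <- powerRZ_mult. replace (-1 * -1) with 1 by ring. apply powerRZ_R1. }
  nra.
Qed.

Lemma powerRZ_m1_add2 k : powerRZ (-1) (k + 2) = powerRZ (-1) k.
Proof. rewrite powerRZ_add by lra. simpl. ring. Qed.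

Lemma one_add_sqr_div4_lt_exp x : 0 < x -> 1 + x ^ 2 / 4 < exp x.
Proof.
  intro Hx.
  replace (exp x) with (exp (x / 2) * exp (x / 2)) by (rewrite <- exp_plus; f_equal; field).
  assert (1 + x / 2 < exp (x / 2)) by (apply exp_ineq1; lra).
  nra.
Qed.

Lemma one_add_2sqr_lt_exp_mul_PI y : 0 < y -> 1 + 2 * y ^ 2 < exp (y * PI).
Proof.
  intro Hy. pose proof PI2_3_2.
  assert (HyPI : 0 < y * PI) by (apply Rmult_lt_0_compat; lra).
  pose proof (one_add_sqr_div4_lt_exp (y * PI) HyPI).
  assert (y ^ 2 * 8 <= y ^ 2 * PI ^ 2) by (apply Rmult_le_compat_l; [apply pow2_ge_0 | nra]).
  replace ((y * PI) ^ 2) with (y ^ 2 * PI ^ 2) in * by ring.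
  lra.
Qed.

Lemma IZR_sqr_ge_1 k : (k <> 0)%Z -> 1 <= IZR k ^ 2.
Proof. intro Hk. rewrite pow_IZR. apply IZR_le. simpl. nia. Qed.

Section Zk_properties.
Variables sigma rho tau : R.
Hypotheses (Hsigma : 1 < sigma) (Hrho : 0 < rho) (Htau : 0 < tau).

Let N := alpha sigma tau ^ 2 * rho ^ 2.
Let e := exp (- (alpha sigma tau * rho * PI)).

Lemma Zk_Zform k : Zk sigma rho k tau = Zform N e (powerRZ (-1) k) (IZR k ^ 2).
Proof. reflexivity. Qed.

Lemma Zk_weights : 0 < N /\ 0 < e < 1 /\ e * (2 * N + 1) < 1.
Proof.
  assert (Hy : 0 < alpha sigma tau * rho)
    by (unfold alpha; repeat apply Rmult_lt_0_compat; lra).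
  assert (Hexp := one_add_2sqr_lt_exp_mul_PI _ Hy).
  unfold N, e. rewrite exp_Ropp.
  pose proof (exp_pos (alpha sigma tau * rho * PI)). pose proof (pow_lt _ 2 Hy).
  replace (alpha sigma tau ^ 2 * rho ^ 2) with ((alpha sigma tau * rho) ^ 2) by ring.
  split; [lra|]. split; [split|].
  - now apply Rinv_0_lt_compat.
  - rewrite <- Rinv_1. apply Rinv_lt_contravar; lra.
  - rewrite Rmult_comm. apply Rlt_div_l; lra.
Qed.

Lemma Zk_bounds k : (k <> 0)%Z -> 0 < Zk sigma rho k tau < 1.
Proof.
  intro Hk. destruct Zk_weights as (HN & He & HeN).
  pose proof (powerRZ_m1_bounds k). pose proof (IZR_sqr_ge_1 k Hk).
  rewrite Zk_Zform. split.
  - apply Zform_pos; lra.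
  - now apply Zform_lt_1.
Qed.

Lemma Zk_lt k k' : IZR k ^ 2 < IZR k' ^ 2 -> powerRZ (-1) k' = powerRZ (-1) k ->
  Zk sigma rho k' tau < Zk sigma rho k tau.
Proof.
  intros Hkk' Hpar. destruct Zk_weights as (HN & He & _).
  rewrite !Zk_Zform, Hpar. apply Zform_decreasing; auto.
  - apply powerRZ_m1_bounds.
  - apply pow2_ge_0.
Qed.

End Zk_properties.

Section Critical_points.
Variables mu sigma vn vm rho : R.
Hypotheses (Hmu : 0 < mu < 1) (Hsigma : 1 < sigma)
           (Hvn : 0 < vn) (Hvm : 0 < vm) (Hrho : 0 < rho).

Lemma max_re_eig_Mk_sign k tau s : (k <> 0)%Z -> 0 < tau ->
  max_re_eig_Mk mu sigma vn vm rho k tau s ->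
  sign s = sign (detQ mu sigma (Zk sigma rho k tau)).
Proof.
  intros Hk Htau. apply max_re_eig_migration_sign; auto.
  - now apply Zk_bounds.
  - apply Rdiv_lt_0_compat; [apply exp_pos | lra].
Qed.

Lemma detQ_Zk_nonneg_upto_critical k tk tau : (k <> 0)%Z ->
  critical_point mu sigma vn vm rho k tk -> 0 < tau <= tk ->
  0 <= detQ mu sigma (Zk sigma rho k tau).
Proof.
  intros Hk (_ & Hbefore & Hat & _) Htau.
  destruct (max_re_eig2_exists (Mk11 mu sigma vn rho k tau) (Mk12 mu sigma vn rho k tau)
              (Mk21 mu sigma vm rho k tau) (Mk22 mu sigma vm rho k tau)) as [s Hs].
  pose proof (max_re_eig_Mk_sign k tau s Hk ltac:(lra) Hs) as Hsign.
  destruct (Rle_lt_dec 0 (detQ mu sigma (Zk sigma rho k tau))) as [|Hneg]; [easy|].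
  rewrite (sign_eq_m1 _ Hneg) in Hsign.
  destruct Htau as [Htau [Hlt | ->]].
  - rewrite sign_eq_1 in Hsign by now apply (Hbefore tau). lra.
  - rewrite (Hat s Hs), sign_0 in Hsign. lra.
Qed.

Lemma detQ_Zk_critical k tk : (k <> 0)%Z ->
  critical_point mu sigma vn vm rho k tk -> detQ mu sigma (Zk sigma rho k tk) = 0.
Proof.
  intros Hk Hcrit. pose proof Hcrit as (Htk & _ & Hat & _).
  destruct (max_re_eig2_exists (Mk11 mu sigma vn rho k tk) (Mk12 mu sigma vn rho k tk)
              (Mk21 mu sigma vm rho k tk) (Mk22 mu sigma vm rho k tk)) as [s Hs].
  apply sign_eq_0_inv. rewrite <- (max_re_eig_Mk_sign k tk s Hk Htk Hs), (Hat s Hs).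
  apply sign_0.
Qed.

Lemma critical_point_lt k k' tk tk' : (k <> 0)%Z -> (k' <> 0)%Z ->
  (forall tau, 0 < tau -> Zk sigma rho k' tau < Zk sigma rho k tau) ->
  critical_point mu sigma vn vm rho k tk -> critical_point mu sigma vn vm rho k' tk' ->
  tk < tk'.
Proof.
  intros Hk Hk' HZ Hcrit Hcrit'.
  destruct (Rlt_le_dec tk tk') as [|Hle]; [easy|exfalso].
  assert (Htk' : 0 < tk') by apply Hcrit'.
  pose proof (detQ_Zk_nonneg_upto_critical k tk tk' Hk Hcrit ltac:(lra)).
  pose proof (detQ_Zk_critical k' tk' Hk' Hcrit').
  pose proof (detQ_decreasing mu _ _ _ Hsigma (HZ tk' Htk')).
  lra.
Qed.

End Critical_points.

Theorem theorem1 (mu sigma vn vm rho : R) :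
  0 < mu < 1 -> 1 < sigma -> 1 / (1 - mu) < sigma ->
  0 < vn -> 0 < vm -> 0 < rho ->
  forall (k : Z) (tk tk' : R), (k <> 0)%Z ->
  ((0 < k)%Z -> critical_point mu sigma vn vm rho k tk ->
     critical_point mu sigma vn vm rho (k + 2) tk' -> tk < tk') /\
  ((k < 0)%Z -> critical_point mu sigma vn vm rho k tk ->
     critical_point mu sigma vn vm rho (k - 2) tk' -> tk < tk').
Proof.
  intros Hmu Hsigma _ Hvn Hvm Hrho k tk tk' Hk. split; intros Hsgn.
  - apply critical_point_lt; auto; [lia|]. intros tau Htau.
    apply Zk_lt; auto; [|apply powerRZ_m1_add2].
    rewrite plus_IZR. assert (0 < IZR k) by now apply IZR_lt. nra.
  - apply critical_point_lt; auto; [lia|]. intros tau Htau.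
    apply Zk_lt; auto.
    + rewrite minus_IZR. assert (IZR k < 0) by now apply IZR_lt. nra.
    + rewrite <- (powerRZ_m1_add2 (k - 2)). f_equal. ring.
Qed.
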